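(* Let $\mathcal{R}=(\mathcal{F},R)$ be a 3-DCTRS. If for every rule $\ell\to r\Leftarrow c$ in $R$ the partial grounding $c^{\downarrow \mathrm{Var}(\ell)}$ of $c$ is $\overline{\mathcal{R}}$-feasible, then the transformation $\mathcal{U}$ preserves $\to_{\mathcal{R}}$-irreducibility of $\mathcal{R}$.
   Context: An oriented CTRS $\mathcal{R}=(\mathcal{F},R)$ has rules $\ell\to r\Leftarrow s_1\approx t_1,\dots,s_n\approx t_n$ ($\ell$ not a variable) where conditions are reachability tests: $s\to_{\mathcal{R}}t$ iff there are a rule, a position $p$ and a substitution $\sigma$ with $s|_p=\sigma(\ell)$, $\sigma(s_j)\to^*_{\mathcal{R}}\sigma(t_j)$ for all $j$, and $t=s[\sigma(r)]_p$. It is deterministic (a DCTRS) if for each rule and $1\le i\le n$, $\mathrm{Var}(s_i)\subseteq\mathrm{Var}(\ell)\cup\bigcup_{j<i}\mathrm{Var}(t_j)$; it is a 3-CTRS if $\mathrm{Var}(r)\subseteq\mathrm{Var}(\ell)\cup\mathrm{Var}(c)$ for each rule. The theory $\overline{\mathcal{R}}$ is the first-order theory axiomatizing $\to$ and $\to^*$ (reflexivity of $\to^*$, $x\to y\wedge y\to^* z\Rightarrow x\to^*z$, closure of $\to$ under all argument positions, each rule as the implication $s_1\to^*t_1\wedge\dots\wedge s_n\to^* t_n\Rightarrow \ell\to r$), so that $\overline{\mathcal{R}}\vdash s\to^* t$ iff $s\to^*_{\mathcal{R}}t$. For a set $V$ of variables, the partial grounding $c^{\downarrow V}$ replaces every variable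 $x\in V$ occurring in $c$ by a fresh constant $c_x$ (distinct variables giving distinct constants not in $\mathcal{F}$). A sequence of conditions $s_1\approx t_1,\dots,s_n\approx t_n$ is $\overline{\mathcal{R}}$-feasible if there is a substitution $\sigma$ with $\overline{\mathcal{R}}\vdash\sigma(s_j)\to^*\sigma(t_j)$ for all $j$. Transformation $\mathcal{U}$: each conditional rule $\alpha:\ell\to r\Leftarrow s_1\approx t_1,\dots,s_n\approx t_n$ ($n\ge1$) becomes $\ell\to U^\alpha_1(s_1,\vec x_1)$, $U^\alpha_{i-1}(t_{i-1},\vec x_{i-1})\to U^\alpha_i(s_i,\vec x_i)$ ($2\le i\le n$), $U^\alpha_n(t_n,\vec x_n)\to r$, with fresh symbols $U^\alpha_i$ and $\vec x_i$ a sequence of the variables in $\mathrm{Var}(\ell)\cup\mathrm{Var}(t_1)\cup\dots\cup\mathrm{Var}(t_{i-1})$; unconditional rules are kept; $\mathcal{U}(\mathcal{R})$ is the resulting TRS. $\mathcal{U}$ preserves $\to_{\mathcal{R}}$-irreducibility if every $\to_{\mathcal{R}}$-irreducible term over $\mathcal{F}$ and variables is $\to_{\mathcal{U}(\mathcal{R})}$-irreducible. *)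

From Stdlib Require List.
From mathcomp Require Import all_boot.
Set Implicit Arguments. Unset Strict Implicit. Unset Printing Implicit Defensive.

Inductive term (S V : Type) : Type :=
| Var : V -> term S V
| Fun : S -> seq (term S V) -> term S V.
Arguments Var {S V}.
Arguments Fun {S V}.

Fixpoint vars (S : Type) (V : Type) (t : term S V) : seq V :=
  match t with
  | Var x => [:: x]
  | Fun _ ts => flatten (map (@vars S V) ts)
  end.

Fixpoint subst (S V : Type) (sigma : V -> term S V) (t : term S V) : term S V :=
  match t with
  | Var x => sigma x
  | Fun f ts => Fun f (map (subst sigma) ts)
  end.

Fixpoint map_sym (S S' V : Type) (h : S -> S') (t : term S V) : term S' V :=
  match t with
  | Var x => Var x
  | Fun f ts => Fun (h f) (map (map_sym h) ts)
  end.

Record crule (S V : Type) : Type := CRule {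
  lhs : term S V;
  rhs : term S V;
  conds : seq (term S V * term S V) }.
Arguments CRule {S V}.

Definition map_rule (S S' V : Type) (h : S -> S') (rl : crule S V) : crule S' V :=
  CRule (map_sym h (lhs rl)) (map_sym h (rhs rl))
        (map (fun c => (map_sym h c.1, map_sym h c.2)) (conds rl)).

(* A CTRS is given by its (possibly infinite) set of rules R. *)

(* ---------- Oriented conditional rewriting: ->_R and ->*_R ----------
   This inductive definition is the least model of the Horn theory R-bar
   (reflexivity/transitivity of ->*, closure of -> under argument positions,
   each rule as an implication); hence "R-bar |- s ->* t" is csteps R s t. *)
Inductive cstep (S V : Type) (R : crule S V -> Prop) : term S V -> term S V -> Prop :=
| cstep_rule (rl : crule S V) (sigma : V -> term S V) :
    R rl ->
    (forall c, List.In c (conds rl) -> csteps R (subst sigma c.1) (subst sigma c.2)) ->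
    cstep R (subst sigma (lhs rl)) (subst sigma (rhs rl))
| cstep_ctx (f : S) (l1 : seq (term S V)) (t u : term S V) (l2 : seq (term S V)) :
    cstep R t u -> cstep R (Fun f (l1 ++ t :: l2)) (Fun f (l1 ++ u :: l2))
with csteps (S V : Type) (R : crule S V -> Prop) : term S V -> term S V -> Prop :=
| csteps_refl (t : term S V) : csteps R t t
| csteps_step (t u v : term S V) : cstep R t u -> csteps R u v -> csteps R t v.

Definition irreducible (S V : Type) (R : crule S V -> Prop) (t : term S V) : Prop :=
  forall u, ~ cstep R t u.

Definition is_var (S V : Type) (t : term S V) : bool :=
  if t is Var _ then true else false.

Section Classes.
Variables (F : Type) (V : eqType).

Definition vars_upto (rl : crule F V) (k : nat) (x : V) : bool :=
  (x \in vars (lhs rl)) || has (fun c => x \in vars c.2) (take k (conds rl)).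

Definition deterministic_rule (rl : crule F V) : Prop :=
  forall i, i < size (conds rl) ->
  forall x, x \in vars (nth (lhs rl, lhs rl) (conds rl) i).1 -> vars_upto rl i x.

Definition type3_rule (rl : crule F V) : Prop :=
  forall x, x \in vars (rhs rl) ->
    (x \in vars (lhs rl)) ||
    has (fun c => (x \in vars c.1) || (x \in vars c.2)) (conds rl).

Definition is_3DCTRS (R : crule F V -> Prop) : Prop :=
  forall rl, R rl -> [/\ ~~ is_var (lhs rl), deterministic_rule rl & type3_rule rl].

(* ---------- Partial grounding and feasibility ----------
   The fresh constant c_x is  Fun (inr x) [::]  over the signature F + V. *)
Fixpoint ground_term (P : V -> bool) (t : term F V) : term (F + V) V :=
  match t with
  | Var x => if P x then Fun (inr x) [::] else Var x
  | Fun f ts => Fun (inl f) (map (ground_term P) ts)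
  end.

Definition ground_conds (P : V -> bool) (c : seq (term F V * term F V)) :
  seq (term (F + V) V * term (F + V) V) :=
  map (fun st => (ground_term P st.1, ground_term P st.2)) c.

Definition liftR (S' : Type) (h : F -> S') (R : crule F V -> Prop) : crule S' V -> Prop :=
  fun rl' => exists2 rl, R rl & rl' = map_rule h rl.

Definition feasible (S : Type) (R : crule S V -> Prop) (c : seq (term S V * term S V)) : Prop :=
  exists sigma : V -> term S V,
    forall st, List.In st c -> csteps R (subst sigma st.1) (subst sigma st.2).

(* ---------- The unraveling U ----------
   Symbols of U(R): F plus fresh symbols U^alpha_i, encoded as inr (alpha, i).
   [xs alpha i] is the chosen sequence of variables  x_i  for rule alpha. *)
Definition Usig := (F + (crule F V * nat))%type.

Definition valid_xs (R : crule F V -> Prop) (xs : crule F V -> nat -> seq V) : Prop :=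
  forall rl, R rl -> forall i, 1 <= i <= size (conds rl) ->
    uniq (xs rl i) /\ forall x, (x \in xs rl i) = vars_upto rl i.-1 x.

Definition Uterm (rl : crule F V) (xs : crule F V -> nat -> seq V) (i : nat)
  (t : term F V) : term Usig V :=
  Fun (inr (rl, i)) (map_sym inl t :: map Var (xs rl i)).

Definition Urules (R : crule F V -> Prop) (xs : crule F V -> nat -> seq V) :
  crule Usig V -> Prop :=
  fun rl' => exists2 rl, R rl &
    let n := size (conds rl) in
    let s i := (nth (lhs rl, lhs rl) (conds rl) i.-1).1 in
    let t i := (nth (lhs rl, lhs rl) (conds rl) i.-1).2 in
    (n = 0 /\ rl' = map_rule inl rl) \/
    (0 < n /\
     (rl' = CRule (map_sym inl (lhs rl)) (Uterm rl xs 1 (s 1)) [::] \/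
      (exists2 i, 2 <= i <= n &
         rl' = CRule (Uterm rl xs i.-1 (t i.-1)) (Uterm rl xs i (s i)) [::]) \/
      rl' = CRule (Uterm rl xs n (t n)) (map_sym inl (rhs rl)) [::])).

Definition U_preserves_irreducibility (R : crule F V -> Prop)
  (xs : crule F V -> nat -> seq V) : Prop :=
  forall t : term F V, irreducible R t -> irreducible (Urules R xs) (map_sym inl t).

End Classes.

From mathcomp Require Import all_boot.
From Stdlib Require List.
Set Implicit Arguments. Unset Strict Implicit. Unset Printing Implicit Defensive.

(* On a term over F only those rules of U(R) can fire whose left-hand side is
   the left-hand side l of a rule of R: all the other ones are rooted by a
   fresh symbol U^alpha_i.  So a U(R)-redex in an F-term is an instance
   sigma(l), and it suffices to show that it is an R-redex as well.
   Feasibility of c^{Var(l)} yields tau solving the conditions, in which the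
   fresh constants c_x stand for arbitrary values of the variables of l.
   Replacing every c_x by sigma(x) preserves R-rewriting (R does not mention
   the constants), so the substitution that is sigma on Var(l) and the image
   of tau elsewhere satisfies the conditions and rewrites sigma(l). *)

Fixpoint term_nested_ind (S V : Type) (P : term S V -> Prop)
  (PVar : forall x, P (Var x))
  (PFun : forall f ts, (forall t, List.In t ts -> P t) -> P (Fun f ts))
  (t : term S V) : P t :=
  match t with
  | Var x => PVar x
  | Fun f ts =>
      PFun f ts
        ((fix P_In (us : seq (term S V)) : forall u, List.In u us -> P u :=
            match us with
            | [::] => fun _ no => False_ind _ no
            | v :: vs => fun u in_u =>
                match in_u with
                | or_introl v_u => eq_ind v P (term_nested_ind PVar PFun v) u v_u
                | or_intror in_vs => P_In vs u in_vs
                end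
            end) ts)
  end.

Lemma map_eq_cat_cons (A B : Type) (f : A -> B) s l1 y l2 :
  map f s = l1 ++ y :: l2 -> exists s1 x s2, s = s1 ++ x :: s2 /\ f x = y.
Proof.
elim: l1 s => [|z l1 IH] [|x s] //= [fx_y map_s].
- by exists [::], x, s.
- have [s1 [x' [s2 [-> fx'_y]]]] := IH s map_s.
  by exists (x :: s1), x', s2.
Qed.

Lemma mem_vars_Fun (S : Type) (V : eqType) f (ts : seq (term S V)) t x :
  List.In t ts -> x \in vars t -> x \in vars (Fun f ts).
Proof.
elim: ts => //= u ts IH [-> | t_ts] x_t; rewrite mem_cat ?x_t //.
by rewrite IH ?orbT.
Qed.

Lemma eq_in_subst (S : Type) (V : eqType) (s1 s2 : V -> term S V) u :
  {in vars u, s1 =1 s2} -> subst s1 u = subst s2 u.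
Proof.
elim/term_nested_ind: u => [x | f ts IH] /= eq_s; first by apply: eq_s; rewrite inE.
congr Fun; apply: List.map_ext_in => t t_ts; apply: IH => // x x_t.
exact/eq_s/(mem_vars_Fun f t_ts).
Qed.

Lemma csteps_trans (S V : Type) (R : crule S V -> Prop) a b c :
  csteps R a b -> csteps R b c -> csteps R a c.
Proof. by elim=> // t u v t_u _ IH /IH; apply: csteps_step. Qed.

Lemma csteps_ctx (S V : Type) (R : crule S V -> Prop) f l1 l2 a b :
  csteps R a b -> csteps R (Fun f (l1 ++ a :: l2)) (Fun f (l1 ++ b :: l2)).
Proof.
elim=> [t | t u v t_u _ IH]; first exact: csteps_refl.
exact: csteps_step (cstep_ctx _ _ _ t_u) IH.
Qed.

Scheme cstep_mut_ind := Minimality for cstep Sort Prop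
with csteps_mut_ind := Minimality for csteps Sort Prop.

Section Collapse.
Variables (F S' : Type) (V : eqType) (g : S' -> term F V).

Fixpoint collapse (t : term (F + S') V) : term F V :=
  match t with
  | Var x => Var x
  | Fun (inl f) ts => Fun f (map collapse ts)
  | Fun (inr s) _ => g s
  end.

Lemma collapse_lift (u : term F V) : collapse (map_sym inl u) = u.
Proof.
elim/term_nested_ind: u => [x | f ts IH] //=.
by rewrite -map_comp; congr Fun; rewrite -[RHS]map_id; apply: List.map_ext_in.
Qed.

Lemma collapse_subst_lift sigma (u : term F V) :
  collapse (subst sigma (map_sym inl u)) = subst (collapse \o sigma) u.
Proof.
elim/term_nested_ind: u => [x | f ts IH] //=.
by rewrite -!map_comp; congr Fun; apply: List.map_ext_in.
Qed.

Lemma lift_instance sigma (l t : term F V) :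
  subst sigma (map_sym inl l) = map_sym inl t -> t = subst (collapse \o sigma) l.
Proof. by move/(congr1 collapse); rewrite collapse_subst_lift collapse_lift. Qed.

Lemma collapse_csteps (R : crule F V -> Prop) a b :
  csteps (liftR inl R) a b -> csteps R (collapse a) (collapse b).
Proof.
pose P a b := csteps R (collapse a) (collapse b).
apply: (@csteps_mut_ind _ _ _ P P) => [_ sigma [rl R_rl ->] _ IH | | t | t u v _ IH1 _ IH2].
- rewrite /P /= !collapse_subst_lift.
  apply: csteps_step (csteps_refl _ _); apply: cstep_rule => // c c_rl.
  have := IH (map_sym inl c.1, map_sym inl c.2).
  rewrite /P /= !collapse_subst_lift; apply.
  exact: (List.in_map (fun c => (map_sym inl c.1, map_sym inl c.2))).
- move=> [f | s] l1 t u l2 _ IH; last exact: csteps_refl.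
  by rewrite /P /= !map_cat; apply: csteps_ctx.
- exact: csteps_refl.
- exact: csteps_trans IH1 IH2.
Qed.

End Collapse.

Lemma collapse_ground (F : Type) (V : eqType) (P : pred V) (g : V -> term F V) tau
  (s : term F V) :
  collapse g (subst tau (ground_term P s)) =
  subst (fun x => if P x then g x else collapse g (tau x)) s.
Proof.
elim/term_nested_ind: s => [x | f ts IH] /=; first by case: (P x).
by rewrite -!map_comp; congr Fun; apply: List.map_ext_in.
Qed.

Section Unraveling.
Variables (F : Type) (V : eqType) (R : crule F V -> Prop).

Lemma feasible_lhs_reducible rl sigma :
  R rl ->
  feasible (liftR inl R) (ground_conds (fun x => x \in vars (lhs rl)) (conds rl)) ->
  exists w, cstep R (subst sigma (lhs rl)) w.
Proof.
move=> R_rl [tau solves].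
pose theta x := if x \in vars (lhs rl) then sigma x else collapse sigma (tau x).
exists (subst theta (rhs rl)).
have -> : subst sigma (lhs rl) = subst theta (lhs rl).
  by apply: eq_in_subst => x x_l; rewrite /theta x_l.
apply: cstep_rule => // c c_rl.
have := collapse_csteps sigma (solves _ (List.in_map _ _ _ c_rl)).
by rewrite !collapse_ground.
Qed.

Variable xs : crule F V -> nat -> seq V.

Lemma Urules_lhs rl' :
  Urules R xs rl' ->
  (exists2 rl, R rl & lhs rl' = map_sym inl (lhs rl)) \/
  (exists rl i t, lhs rl' = Uterm rl xs i t).
Proof.
case=> rl R_rl [[_ ->] | [_ [-> | [[i _ ->] | ->]]]].
- by left; exists rl.
- by left; exists rl.
- by right; do 3 eexists.
- by right; do 3 eexists.
Qed.

Hypothesis feasible_conds : forall rl, R rl ->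
  feasible (liftR inl R) (ground_conds (fun x => x \in vars (lhs rl)) (conds rl)).

Lemma Ustep_lift_reducible a b :
  cstep (Urules R xs) a b -> forall t, a = map_sym inl t -> exists w, cstep R t w.
Proof.
elim=> [rl' sigma U_rl' _ | f l1 u u' l2 _ IH] t.
- case: (Urules_lhs U_rl') => [[rl R_rl ->] | [rl [i [s ->]]]]; last by case: t.
  move=> /(lift_instance (fun _ => t)) ->.
  exact: feasible_lhs_reducible R_rl (feasible_conds R_rl).
- case: t => // h ts /= [_ ts_E].
  have [ts1 [v [ts2 [-> v_u]]]] := map_eq_cat_cons (esym ts_E).
  have [w v_w] := IH v (esym v_u).
  by exists (Fun h (ts1 ++ w :: ts2)); apply: cstep_ctx.
Qed.

End Unraveling.

Theorem proposition30 (F : Type) (V : eqType) (R : crule F V -> Prop)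
  (xs : crule F V -> nat -> seq V) :
  is_3DCTRS R ->
  valid_xs R xs ->
  (forall rl, R rl ->
     feasible (liftR inl R)
       (ground_conds (fun x => x \in vars (lhs rl)) (conds rl))) ->
  U_preserves_irreducibility R xs.
Proof.
move=> _ _ feasible_conds t t_irr u.
move/(Ustep_lift_reducible feasible_conds)/(_ t erefl) => [w].
exact: t_irr.
Qed.
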